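(* Fix an instance of MCND and an arbitrary partial aggregation $\mathcal{B}^p$ (see context). (i) If $(\bar x,\bar y)$ is a feasible solution of the LP relaxation of the PA formulation built on $\mathcal{B}^p$, then $(x,y)$ defined by $x_{ij}^{\mathcal{K}_n}=\sum_{b\in\mathcal{B}^p:o_b=n}\sum_{D\in\mathcal{G}_b^{ij}}\bar x_{ij}^D$ for every arc $(i,j)\in\mathcal{A}$ and every node $n$ that is the origin of at least one commodity, and $y_{ij}=\bar y_{ij}$, is a feasible solution of the LP relaxation of the FA formulation, with the same objective value. (ii) There exist an instance and a partial aggregation $\mathcal{B}^p$ for which the LP relaxation of FA has a feasible solution that is not the image under this map of any feasible solution of the LP relaxation of PA built on $\mathcal{B}^p$. (That is, PA is stronger than FA.)
   Context: An instance of MCND consists of a directed graph $G=(\mathcal{N},\mathcal{A})$, a finite set $\mathcal{K}$ of commodities, each $k\in\mathcal{K}$ having an origin $o^k\in\mathcal{N}$, a destination $s^k\in\mathcal{N}$ and a demand $d^k\ge 0$, and for each arc $(i,j)\in\mathcal{A}$ a capacity $u_{ij}$, a per-unit flow cost $c_{ij}$ and a fixed cost $f_{ij}$, all nonnegative. Let $o_i^k=1$ if $i=o^k$ and $0$ otherwise, $s_i^k=1$ if $i=s^k$ and $0$ otherwise, $\mathcal{N}_i^+=\{j:(i,j)\in\mathcal{A}\}$, $\mathcal{N}_i^-=\{j:(j,i)\in\mathcal{A}\}$. Dispersion: a nonempty set $\mathcal{K}_b\subseteq\mathcal{K}$ of commodities sharing a common origin $o_b$, together with, for every arc $(i,j)\in\mathcal{A}$,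 a partition of $\mathcal{K}_b$ into $\mathcal{K}_b^{ij}$ (aggregated on $(i,j)$) and $\mathcal{D}_b^{ij}$ (disaggregated on $(i,j)$); either part may be empty. Let $\mathcal{G}_b^{ij}$ be the family consisting of the set $\mathcal{K}_b^{ij}$ (if nonempty) together with the singletons $\{k\}$, $k\in\mathcal{D}_b^{ij}$. A partial aggregation is a set $\mathcal{B}$ of dispersions such that every $k\in\mathcal{K}$ lies in $\mathcal{K}_b$ for exactly one $b\in\mathcal{B}$. LP relaxation of PA (for $\mathcal{B}$): variables $x_{ij}^D\ge0$ for $(i,j)\in\mathcal{A}$, $b\in\mathcal{B}$, $D\in\mathcal{G}_b^{ij}$ (since the $\mathcal{K}_b$ are disjoint, $D$ determines $b$), and $0\le y_{ij}\le1$; minimize $\sum_{(i,j)}c_{ij}\sum_{b}\sum_{D\in\mathcal{G}_b^{ij}}x_{ij}^D+\sum_{(i,j)}f_{ij}y_{ij}$ subject to: for all $b\in\mathcal{B}$, $i\in\mathcal{N}$: $\sum_{j\in\mathcal{N}_i^+}\sum_{D\in\mathcal{G}_b^{ij}}x_{ij}^D-\sum_{j\in\mathcal{N}_i^-}\sum_{D\in\mathcal{G}_b^{ji}}x_{ji}^D=\sum_{k\in\mathcal{K}_b}(o_i^k-s_i^k)d^k$; for all $(i,j)$: $\sum_b\sum_{D\in\mathcal{G}_b^{ij}}x_{ij}^D\le u_{ij}y_{ij}$; for all $(i,j),b,D\in\mathcal{G}_b^{ij}$: $x_{ij}^D\le(\sum_{k\in D}d^k)y_{ij}$. FA formulation: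 the full aggregation $\mathcal{B}^f$ has one dispersion for each node $n$ that is the origin of at least one commodity, with $\mathcal{K}_n=\{k\in\mathcal{K}:o^k=n\}$, $\mathcal{K}_n^{ij}=\mathcal{K}_n$ and $\mathcal{D}_n^{ij}=\emptyset$ for every arc; the LP relaxation of FA is the LP relaxation of PA for $\mathcal{B}^f$, with variables $x_{ij}^{\mathcal{K}_n}$ and $y_{ij}$. *)

From HB Require Import structures.
From mathcomp Require Import all_boot all_order all_algebra.
Set Warnings "-notation-overridden,-ambiguous-paths".

Set Implicit Arguments. Unset Strict Implicit. Unset Printing Implicit Defensive.
Import Order.TTheory GRing.Theory Num.Theory.
Local Open Scope ring_scope.

(* An instance of MCND over an ordered field R: nodes [node], commodities
   [comm], the arc set [arcs] (a set of ordered pairs (i,j)), origin/destination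
   and demand of each commodity, and capacity / unit cost / fixed cost of arcs
   (only their values on [arcs] matter). *)
Record MCND (R : realFieldType) := {
  node : finType;
  comm : finType;
  arcs : {set node * node};
  orig : comm -> node;
  dest : comm -> node;
  dem : comm -> R;
  cap : node * node -> R;
  ucost : node * node -> R;
  fcost : node * node -> R
}.

Arguments node {R} I : rename.
Arguments comm {R} I : rename.
Arguments arcs {R} I : rename.
Arguments orig {R} I _ : rename.
Arguments dest {R} I _ : rename.
Arguments dem {R} I _ : rename.
Arguments cap {R} I _ : rename.
Arguments ucost {R} I _ : rename.
Arguments fcost {R} I _ : rename.

Definition mcnd_ok (R : realFieldType) (I : MCND R) : Prop :=
  (forall k, 0 <= dem I k) /\
  (forall a, a \in arcs I -> [/\ 0 <= cap I a, 0 <= ucost I a & 0 <= fcost I a]).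

(* A family of dispersions, indexed by a finite type [disp]: dispersion b has
   commodity set [Kb b], common origin [ob b], and on arc a the aggregated part
   [agg b a]; the disaggregated part is [Kb b :\: agg b a]. *)
Record PAgg (R : realFieldType) (I : MCND R) := {
  disp : finType;
  Kb : disp -> {set comm I};
  ob : disp -> node I;
  agg : disp -> node I * node I -> {set comm I}
}.

Arguments disp {R I} P : rename.
Arguments Kb {R I} P _ : rename.
Arguments ob {R I} P _ : rename.
Arguments agg {R I} P _ _ : rename.

Definition pagg_ok (R : realFieldType) (I : MCND R) (P : PAgg I) : Prop :=
  [/\ (forall b, Kb P b != set0),
      (forall b k, k \in Kb P b -> orig I k = ob P b),
      (forall b a, agg P b a \subset Kb P b) &
      (forall k, exists b, k \in Kb P b /\ forall b', k \in Kb P b' -> b' = b)].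

Definition groups (R : realFieldType) (I : MCND R) (P : PAgg I)
  (b : disp P) (a : node I * node I) : {set {set comm I}} :=
  (if agg P b a != set0 then [set agg P b a] else set0)
  :|: [set [set k] | k in Kb P b :\: agg P b a].

Arguments groups {R I} P b a : rename.

(* Flow on arc a of dispersion b (sum over D in G_b^a). Variables are
   x a b D, meaningful for D in groups P b a. *)
Definition dflow (R : realFieldType) (I : MCND R) (P : PAgg I)
  (x : node I * node I -> disp P -> {set comm I} -> R) b a : R :=
  \sum_(D in groups P b a) x a b D.

Definition totflow (R : realFieldType) (I : MCND R) (P : PAgg I)
  (x : node I * node I -> disp P -> {set comm I} -> R) a : R :=
  \sum_b dflow x b a.

Definition PA_LP_feasible (R : realFieldType) (I : MCND R) (P : PAgg I)
  (x : node I * node I -> disp P -> {set comm I} -> R)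
  (y : node I * node I -> R) : Prop :=
  [/\ (forall a b D, a \in arcs I -> D \in groups P b a -> 0 <= x a b D),
      (forall a, a \in arcs I -> 0 <= y a <= 1),
      (forall b i,
         \sum_(a in arcs I | a.1 == i) dflow x b a
         - \sum_(a in arcs I | a.2 == i) dflow x b a
         = \sum_(k in Kb P b)
             (((i == orig I k)%:R - (i == dest I k)%:R) * dem I k)),
      (forall a, a \in arcs I -> totflow x a <= cap I a * y a) &
      (forall a b D, a \in arcs I -> D \in groups P b a ->
         x a b D <= (\sum_(k in D) dem I k) * y a)].

Definition PA_LP_obj (R : realFieldType) (I : MCND R) (P : PAgg I)
  (x : node I * node I -> disp P -> {set comm I} -> R)
  (y : node I * node I -> R) : R :=
  \sum_(a in arcs I) ucost I a * totflow x a
  + \sum_(a in arcs I) fcost I a * y a.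

(* Full aggregation: one dispersion per origin node n, K_n = {k | o^k = n},
   fully aggregated on every arc. *)
Definition origins (R : realFieldType) (I : MCND R) : {set node I} :=
  [set orig I k | k : comm I].

Definition Kn (R : realFieldType) (I : MCND R) (n : node I) : {set comm I} :=
  [set k | orig I k == n].

Arguments origins {R} I : rename.
Arguments Kn {R} I n : rename.

Definition FAgg (R : realFieldType) (I : MCND R) : PAgg I := {|
  disp := {n : node I | n \in origins I};
  Kb := fun n => Kn I (val n);
  ob := fun n => val n;
  agg := fun n _ => Kn I (val n)
|}.

(* The map of part (i): x_{ij}^{K_n} = sum_{b : o_b = n} sum_{D in G_b^{ij}} xbar_{ij}^D.
   (Defined for every D; only D = K_n is a variable of FA.) *)
Definition PA_to_FA (R : realFieldType) (I : MCND R) (P : PAgg I)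
  (xb : node I * node I -> disp P -> {set comm I} -> R)
  : node I * node I -> disp (FAgg I) -> {set comm I} -> R :=
  fun a n _ => \sum_(b | ob P b == val n) dflow xb b a.

(* (i) The FA variable of origin n on an arc collects the flows of all
   dispersions rooted at n, so flow conservation and the capacity constraints
   are sums of PA constraints, and each FA linking constraint is the sum of
   PA linking constraints because the groups of the dispersions rooted at n
   partition K_n.
   (ii) Two commodities leave node 0, one for node 1 and one with destination
   0, so it never moves. FA bounds the unit flow on the arc (0,1) by
   (d^1 + d^2) y = 2 y, which allows y = 1/2; splitting the commodities into
   two singleton dispersions bounds it by d^1 y = y and forces y = 1. *)
Set Warnings "-notation-overridden,-ambiguous-paths".
From HB Require Import structures.
From mathcomp Require Import all_boot all_order all_algebra lra.
Set Implicit Arguments. Unset Strict Implicit. Unset Printing Implicit Defensive.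
Import Order.TTheory GRing.Theory Num.Theory.
Local Open Scope ring_scope.

Section Groups.
Variables (R : realFieldType) (I : MCND R) (P : PAgg I).

Lemma groups_agg_full b a : agg P b a = Kb P b -> Kb P b != set0 ->
  groups P b a = [set Kb P b].
Proof. by move=> aggE Kb_neq0; rewrite /groups aggE Kb_neq0 setDv imset0 setU0. Qed.

Lemma sum_groups (h : comm I -> R) b a : agg P b a \subset Kb P b ->
  \sum_(D in groups P b a) \sum_(k in D) h k = \sum_(k in Kb P b) h k.
Proof.
move=> agg_sub; rewrite /groups.
have sum_singletons :
    \sum_(D in [set [set k] | k in Kb P b :\: agg P b a]) \sum_(k in D) h k
    = \sum_(k in Kb P b :\: agg P b a) h k.
  rewrite big_imset /=; last by move=> k k' _ _; apply: set1_inj.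
  by apply: eq_bigr => k _; rewrite big_set1.
case: eqP => [agg0|_] /=.
  by rewrite set0U sum_singletons agg0 setD0.
rewrite big_setU1 /=; last first.
  apply/imsetP => -[k]; rewrite inE => /andP[k_agg _] aggE.
  by move: k_agg; rewrite aggE inE eqxx.
by rewrite sum_singletons (big_setID (A := Kb P b) (agg P b a)) (setIidPr agg_sub).
Qed.

End Groups.

Section PartialToFull.
Variables (R : realFieldType) (I : MCND R) (P : PAgg I).
Hypothesis P_ok : pagg_ok P.

Lemma ob_in_origins b : ob P b \in origins I.
Proof.
case: P_ok => Kb_neq0 orig_Kb _ _.
have /set0Pn[k k_b] := Kb_neq0 b.
by rewrite -(orig_Kb _ _ k_b); apply/imsetP; exists k.
Qed.

Lemma sum_by_origin (F : disp P -> R) :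
  \sum_(n : disp (FAgg I)) \sum_(b | ob P b == val n) F b = \sum_b F b.
Proof.
pose origin_of b : disp (FAgg I) := exist _ (ob P b) (ob_in_origins b).
by rewrite (partition_big origin_of predT).
Qed.

Lemma sum_Kb_by_origin (n : node I) (g : comm I -> R) :
  \sum_(b | ob P b == n) \sum_(k in Kb P b) g k = \sum_(k in Kn I n) g k.
Proof.
case: P_ok => _ orig_Kb _ Kb_partition.
rewrite (exchange_big_dep (fun k => orig I k == n)) /=; last first.
  by move=> b k /eqP <- k_b; rewrite (orig_Kb _ _ k_b).
apply: eq_big => [k|k k_n]; first by rewrite inE.
have [b [k_b b_uniq]] := Kb_partition k.
rewrite (bigD1 b) /=; last by rewrite k_b andbT -(orig_Kb _ _ k_b).
rewrite big1 ?addr0 // => b' /andP[/andP[_ k_b'] b'_neq].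
by rewrite (b_uniq _ k_b') eqxx in b'_neq.
Qed.

Lemma groups_FAgg (n : disp (FAgg I)) a : groups (FAgg I) n a = [set Kn I (val n)].
Proof.
apply: groups_agg_full => //=.
case: n => n /= /imsetP[k _ ->]; apply/set0Pn; exists k; by rewrite inE.
Qed.

Variable xb : node I * node I -> disp P -> {set comm I} -> R.

Lemma dflow_PA_to_FA n a :
  dflow (PA_to_FA xb) n a = \sum_(b | ob P b == val n) dflow xb b a.
Proof. by rewrite /dflow groups_FAgg big_set1. Qed.

Lemma totflow_PA_to_FA a : totflow (PA_to_FA xb) a = totflow xb a.
Proof. by rewrite /totflow (eq_bigr _ (fun n _ => dflow_PA_to_FA n a)) sum_by_origin. Qed.

Lemma PA_to_FA_obj yb : PA_LP_obj (PA_to_FA xb) yb = PA_LP_obj xb yb.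
Proof. by rewrite /PA_LP_obj (eq_bigr _ (fun a _ => congr1 _ (totflow_PA_to_FA a))). Qed.

Lemma PA_to_FA_feasible yb :
  PA_LP_feasible xb yb -> PA_LP_feasible (PA_to_FA xb) yb.
Proof.
case=> x_ge0 y_01 conservation capacity linking; split => //.
- move=> a n D a_in _; apply: sumr_ge0 => b _.
  by apply: sumr_ge0 => D' D'_in; apply: x_ge0.
- move=> n i; rewrite !(eq_bigr _ (fun a _ => dflow_PA_to_FA n a)) /=.
  rewrite [X in X - _]exchange_big [X in _ - X]exchange_big /= -sumrB.
  by rewrite (eq_bigr _ (fun b _ => conservation b i)) sum_Kb_by_origin.
- by move=> a a_in; rewrite totflow_PA_to_FA; apply: capacity.
- move=> a n D a_in; rewrite groups_FAgg inE => /eqP ->.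
  rewrite /PA_to_FA -sum_Kb_by_origin mulr_suml; apply: ler_sum => b _.
  case: P_ok => _ _ agg_sub _.
  rewrite -(sum_groups (dem I) (agg_sub b a)) mulr_suml; apply: ler_sum => D' D'_in.
  exact: linking.
Qed.

End PartialToFull.

Section SeparatingInstance.
Variable R : realFieldType.

Definition arc01 : 'I_2 * 'I_2 := (ord0, ord_max).

Definition two_node_instance : MCND R := {|
  node := 'I_2; comm := bool; arcs := [set arc01];
  orig := fun _ => ord0; dest := fun k : bool => if k then ord_max else ord0;
  dem := fun _ => 1; cap := fun _ => 2; ucost := fun _ => 0; fcost := fun _ => 0 |}.

Definition singleton_dispersions : PAgg two_node_instance := {|
  disp := bool; Kb := fun k => [set k] : {set comm two_node_instance};
  ob := fun _ => ord0 : node two_node_instance;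
  agg := fun k _ => [set k] : {set comm two_node_instance} |}.

Lemma two_node_instance_ok : mcnd_ok two_node_instance.
Proof. by split => //= a _; split; rewrite ?ler0n. Qed.

Lemma singleton_dispersions_ok : pagg_ok singleton_dispersions.
Proof.
split => //= [k|k]; first by apply/set0Pn; exists k; rewrite inE.
by exists k; split => [|k']; rewrite inE // => /eqP.
Qed.

Lemma sum_arcs01 (F : 'I_2 * 'I_2 -> R) (Q : pred ('I_2 * 'I_2)) :
  \sum_(a in arcs two_node_instance | Q a) F a = if Q arc01 then F arc01 else 0.
Proof. by rewrite big_mkcondr big_set1. Qed.

Lemma val_FAgg_two_node (n : disp (FAgg two_node_instance)) : val n = ord0.
Proof. by case: n => n /= /imsetP[k _ ->]. Qed.

Lemma card_FAgg_two_node : #|disp (FAgg two_node_instance)| = 1%N.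
Proof.
rewrite card_sig -(card1 (ord0 : 'I_2)); apply: eq_card => n.
apply/imsetP/eqP => [[k _ ->] //|->]; by exists true.
Qed.

Lemma Kn_two_node (n : disp (FAgg two_node_instance)) :
  Kn two_node_instance (val n) = setT.
Proof. by apply/setP => k; rewrite val_FAgg_two_node !inE. Qed.

Lemma FA_half_feasible :
  PA_LP_feasible (P := FAgg two_node_instance) (fun _ _ _ => 1) (fun _ => 2^-1).
Proof.
have half_01 : 0 <= (2^-1 : R) <= 1 by rewrite invr_ge0 ler0n /= invf_le1 ?ltr0n // ler1n.
have dflow1 n a : dflow (P := FAgg two_node_instance) (fun _ _ _ => 1) n a = 1.
  by rewrite /dflow groups_FAgg big_set1.
have sum_Kn (n : disp (FAgg two_node_instance)) (h : bool -> R) :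
    \sum_(k in Kn two_node_instance (val n)) h k = h true + h false.
  by rewrite Kn_two_node (eq_bigl predT) ?big_bool // => k; rewrite inE.
split => [a n D _ _|//|n i|a _|a n D _].
- exact: ler01.
- rewrite !(eq_bigr _ (fun a _ => dflow1 n a)) !sum_arcs01 [LHS]/= sum_Kn.
  by case: i => -[|[|//]] i_lt /=; lra.
- rewrite /totflow (eq_bigr _ (fun n _ => dflow1 n a)) sumr_const.
  by rewrite card_FAgg_two_node /=; lra.
- by rewrite groups_FAgg inE => /eqP ->; rewrite sum_Kn /=; lra.
Qed.

Lemma singleton_dispersions_force_open xb yb :
  PA_LP_feasible (P := singleton_dispersions) xb yb -> 1 <= yb arc01.
Proof.
case=> _ _ conservation _ linking.
have arc01_in : arc01 \in arcs two_node_instance by rewrite inE.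
have groups_true : groups singleton_dispersions true arc01 = [set [set true]].
  by apply: groups_agg_full => //=; apply/set0Pn; exists true; rewrite inE.
have := conservation true ord_max; rewrite !sum_arcs01 /= big_set1 /=.
rewrite /dflow groups_true big_set1.
have := linking arc01 true [set true] arc01_in.
rewrite groups_true inE eqxx big_set1 => /(_ isT) /=; lra.
Qed.

End SeparatingInstance.

Theorem theorem4 (R : realFieldType) :
  (forall (I : MCND R) (P : PAgg I), mcnd_ok I -> pagg_ok P ->
     forall (xb : node I * node I -> disp P -> {set comm I} -> R)
            (yb : node I * node I -> R),
       PA_LP_feasible xb yb ->
       PA_LP_feasible (PA_to_FA xb) yb /\
       PA_LP_obj (PA_to_FA xb) yb = PA_LP_obj xb yb)
  /\
  (exists (I : MCND R) (P : PAgg I), mcnd_ok I /\ pagg_ok P /\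
     exists (x : node I * node I -> disp (FAgg I) -> {set comm I} -> R)
            (y : node I * node I -> R),
       PA_LP_feasible x y /\
       ~ (exists (xb : node I * node I -> disp P -> {set comm I} -> R)
                   (yb : node I * node I -> R), PA_LP_feasible xb yb /\
            (forall a n, a \in arcs I ->
               x a n (Kn I (val n)) = PA_to_FA xb a n (Kn I (val n))) /\
            (forall a, a \in arcs I -> y a = yb a))).
Proof.
split.
  move=> I P _ P_ok xb yb feas.
  by split; [exact: PA_to_FA_feasible | exact: PA_to_FA_obj].
exists (two_node_instance R), (singleton_dispersions R).
split; first exact: two_node_instance_ok.
split; first exact: singleton_dispersions_ok.
exists (fun _ _ _ => 1), (fun _ => 2^-1); split; first exact: FA_half_feasible.
case=> xb [yb [feas [_ y_eq]]].
have := singleton_dispersions_force_open feas.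
rewrite -y_eq ?inE //; lra.
Qed.
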